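(* Let $\mathcal{H}$ be a real Hilbert space, suppose $B\colon \mathcal{H}\to\mathcal{H}$ is monotone and $\rho\geq 0$. Then the operator $B':=B-\rho I$ is $L'$-Lipschitz, where $L'=L+\rho$ if $B$ is $L$-Lipschitz; $L'=L-\rho$ if $B$ is $1/L$-cocoercive and $\rho\leq\frac{L}{2}$; and $L'=\rho$ if $B$ is $1/L$-cocoercive and $\rho>\frac{L}{2}$.
   Context: $B$ is $1/L$-cocoercive if $\langle x-y,B(x)-B(y)\rangle\geq\frac1L\|B(x)-B(y)\|^2$ for all $x,y\in\mathcal{H}$. $I$ is the identity operator. *)

(* A real Hilbert space is modelled as an R-vector space
   (lmodType R, R : realType) equipped with an inner product whose induced
   norm is complete. *)
From mathcomp Require Import all_boot all_order all_algebra.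
From mathcomp Require Import reals.
Set Implicit Arguments. Unset Strict Implicit. Unset Printing Implicit Defensive.
Import Order.TTheory GRing.Theory Num.Theory.
Local Open Scope ring_scope.

Section Hilbert.
Variables (R : realType) (V : lmodType R).

Record is_inner_product (ip : V -> V -> R) : Prop := {
  ip_sym : forall x y, ip x y = ip y x;
  ip_linear : forall (a : R) x y z, ip (a *: x + y) z = a * ip x z + ip y z;
  ip_ge0 : forall x, 0 <= ip x x;
  ip_eq0 : forall x, ip x x = 0 -> x = 0 }.

Definition ipnorm (ip : V -> V -> R) (x : V) : R := Num.sqrt (ip x x).

Definition ip_complete (ip : V -> V -> R) : Prop :=
  forall u : nat -> V,
    (forall e : R, 0 < e -> exists N : nat, forall m n : nat,
        (N <= m)%N -> (N <= n)%N -> ipnorm ip (u m - u n) < e) ->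
    exists l : V, forall e : R, 0 < e -> exists N : nat, forall n : nat,
        (N <= n)%N -> ipnorm ip (u n - l) < e.

Definition is_real_hilbert (ip : V -> V -> R) : Prop :=
  is_inner_product ip /\ ip_complete ip.

Definition monotone_op (ip : V -> V -> R) (B : V -> V) : Prop :=
  forall x y, 0 <= ip (x - y) (B x - B y).

Definition lipschitz_op (ip : V -> V -> R) (B : V -> V) (L : R) : Prop :=
  forall x y, ipnorm ip (B x - B y) <= L * ipnorm ip (x - y).

Definition cocoercive_op (ip : V -> V -> R) (B : V -> V) (L : R) : Prop :=
  forall x y, ip (x - y) (B x - B y) >= L^-1 * ipnorm ip (B x - B y) ^+ 2.

End Hilbert.

(** Write d := B x - B y and u := x - y.  Expanding the square,
    ||d - rho u||^2 = ||d||^2 - 2 rho <u, d> + rho^2 ||u||^2.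
    If B is L-Lipschitz, monotonicity drops the middle term and
    ||d||^2 + rho^2 ||u||^2 <= (L + rho)^2 ||u||^2.  If B is 1/L-cocoercive,
    ||d||^2 <= L <u, d>; for rho > L/2 this already makes
    ||d||^2 - 2 rho <u, d> nonpositive, while for rho <= L/2 one combines it
    with ||L u - d||^2 >= 0 to get the bound (L - rho)^2 ||u||^2. *)
From mathcomp Require Import all_boot all_order all_algebra.
From mathcomp Require Import reals.
From mathcomp Require Import ring lra.
Set Implicit Arguments. Unset Strict Implicit. Unset Printing Implicit Defensive.
Import Order.TTheory GRing.Theory Num.Theory.
Local Open Scope ring_scope.

Section InnerProductSpace.
Variables (R : realType) (V : lmodType R) (ip : V -> V -> R).
Hypothesis ipP : is_inner_product ip.

Lemma ipnorm_ge0 x : 0 <= ipnorm ip x.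
Proof. exact: sqrtr_ge0. Qed.

Lemma sqr_ipnorm x : ipnorm ip x ^+ 2 = ip x x.
Proof. by rewrite sqr_sqrtr // (ip_ge0 ipP). Qed.

Lemma sqr_ipnorm_subZ d u (c : R) :
  ipnorm ip (d - c *: u) ^+ 2
  = ipnorm ip d ^+ 2 - 2 * c * ip u d + c ^+ 2 * ipnorm ip u ^+ 2.
Proof.
rewrite !sqr_ipnorm -scaleNr addrC (ip_linear ipP) ![ip _ (_ + d)](ip_sym ipP).
rewrite !(ip_linear ipP) (ip_sym ipP d u).
ring.
Qed.

Lemma ipnorm_le_sqr x (r : R) :
  0 <= r -> ipnorm ip x ^+ 2 <= r ^+ 2 -> ipnorm ip x <= r.
Proof. by move=> r0; rewrite ler_sqr // nnegrE ipnorm_ge0. Qed.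

Lemma ipnorm_subZ_lipschitz d u (L rho : R) :
  0 <= rho -> 0 <= ip u d -> ipnorm ip d <= L * ipnorm ip u ->
  ipnorm ip (d - rho *: u) <= (L + rho) * ipnorm ip u.
Proof.
move=> rho0 mono lip; have d0 := ipnorm_ge0 d; have u0 := ipnorm_ge0 u.
have Lu0 : 0 <= L * ipnorm ip u by apply: le_trans lip.
have lip2 : ipnorm ip d ^+ 2 <= (L * ipnorm ip u) ^+ 2.
  by rewrite ler_sqr ?nnegrE.
have rho_u0 : 0 <= rho * ipnorm ip u by rewrite mulr_ge0.
apply: ipnorm_le_sqr; first by rewrite mulrDl addr_ge0.
rewrite sqr_ipnorm_subZ; nra.
Qed.

Lemma ipnorm_subZ_cocoercive_le_half d u (L rho : R) :
  0 < L -> rho <= L / 2 -> L^-1 * ipnorm ip d ^+ 2 <= ip u d ->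
  ipnorm ip (d - rho *: u) <= (L - rho) * ipnorm ip u.
Proof.
move=> L0 rhoL; rewrite ler_pdivrMl // => coco.
apply: ipnorm_le_sqr; first by rewrite mulr_ge0 ?ipnorm_ge0 //; lra.
rewrite sqr_ipnorm_subZ -(ler_pM2l L0).
(* L ((L - rho)^2 ||u||^2 - ||d - rho u||^2)
     = (L - 2 rho) ||d - L u||^2 + 2 (L - rho) (L <u, d> - ||d||^2) *)
have h1 : 0 <= (L - 2 * rho) * ipnorm ip (d - L *: u) ^+ 2.
  by rewrite mulr_ge0 ?sqr_ge0 //; lra.
have h2 : 0 <= 2 * (L - rho) * (L * ip u d - ipnorm ip d ^+ 2).
  by rewrite mulr_ge0 ?subr_ge0 //; lra.
rewrite sqr_ipnorm_subZ in h1; nra.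
Qed.

Lemma ipnorm_subZ_cocoercive_gt_half d u (L rho : R) :
  0 < L -> L / 2 < rho -> L^-1 * ipnorm ip d ^+ 2 <= ip u d ->
  ipnorm ip (d - rho *: u) <= rho * ipnorm ip u.
Proof.
move=> L0 rhoL; rewrite ler_pdivrMl // => coco.
have mono : 0 <= ip u d.
  by rewrite -(pmulr_rge0 _ L0) (le_trans (sqr_ge0 _) coco).
have rho0 : 0 <= rho by lra.
apply: ipnorm_le_sqr; first by rewrite mulr_ge0 ?ipnorm_ge0.
rewrite sqr_ipnorm_subZ exprMn; nra.
Qed.

End InnerProductSpace.

Lemma shift_subE (R : pzRingType) (V : lmodType R) (B : V -> V) (rho : R) x y :
  (B x - rho *: x) - (B y - rho *: y) = (B x - B y) - rho *: (x - y).
Proof. by rewrite scalerBr !opprB addrACA [RHS]addrACA [- B y + _]addrC. Qed.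

Theorem lemma4p1 (R : realType) (V : lmodType R) (ip : V -> V -> R)
  (hH : is_real_hilbert ip) (B : V -> V) (hB : monotone_op ip B)
  (rho : R) (hrho : 0 <= rho) (L : R) :
  let B' := fun x : V => B x - rho *: x in
  (lipschitz_op ip B L -> lipschitz_op ip B' (L + rho)) /\
  (0 < L -> cocoercive_op ip B L -> rho <= L / 2 -> lipschitz_op ip B' (L - rho)) /\
  (0 < L -> cocoercive_op ip B L -> L / 2 < rho -> lipschitz_op ip B' rho).
Proof.
move=> B'; have [ipP _] := hH.
split; [|split].
- by move=> lip x y; rewrite shift_subE ipnorm_subZ_lipschitz.
- by move=> L0 coco rhoL x y; rewrite shift_subE ipnorm_subZ_cocoercive_le_half.
- move=> L0 coco rhoL x y.
  by rewrite shift_subE (ipnorm_subZ_cocoercive_gt_half ipP L0).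
Qed.
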